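(* Let $\mathcal{G}^{\mathrm{los}}=(\mathcal{V},\mathcal{E}^{\mathrm{los}})$ be a finite undirected graph with vertex set partitioned into subgroups $\mathcal{V}_1,\dots,\mathcal{V}_M$, such that $\mathcal{G}^{\mathrm{los}}$ is connected and each induced subgraph $\mathcal{G}^{\mathrm{los}}[\mathcal{V}_m]$ is connected. Let each edge $(v_i,v_j)\in\mathcal{E}^{\mathrm{los}}$ carry a real weight $w^{\mathrm{d+los}}_{i,j}=w^{\mathrm{los}}_{i,j}+w^{\mathrm{d}}_{i,j}$, and define $w'_{i,j}=-\beta w^{\mathrm{d+los}}_{i,j}$ if $v_i,v_j$ lie in the same subgroup and $w'_{i,j}=-w^{\mathrm{d+los}}_{i,j}$ otherwise, where $\beta\gg1$ is chosen so that every intra-subgroup weight $w'_{i,j}$ is strictly smaller than every inter-subgroup weight $w'_{i',j'}$. Let $\bar{\mathcal{T}}$ (the ULOS-LCT) be a spanning tree of $\mathcal{G}^{\mathrm{los}}$ minimizing $\sum_{(v_i,v_j)\in\mathcal{E}(\mathcal{T})}w'_{i,j}$ over all spanning trees $\mathcal{T}$ of $\mathcal{G}^{\mathrm{los}}$. Then (i) $\bar{\mathcal{T}}$ is globally and subgroup LOS connected, i.e. it spans $\mathcal{V}$ and each induced subgraph $\bar{\mathcal{T}}[\mathcal{V}_m]$, $m=1,\dots,M$, is connected; and (ii) $\bar{\mathcal{T}}$ is least violated under the nominal controller among candidate trees, i.e. it minimizes $\sum_{(v_i,v_j)\in\mathcal{E}(\mathcal{T})}\big(-w^{\mathrm{d+los}}_{i,j}\big)$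 over all spanning trees $\mathcal{T}$ of $\mathcal{G}^{\mathrm{los}}$ for which every $\mathcal{T}[\mathcal{V}_m]$ is connected.
   Context: Interpretation: vertices are robots, edges are currently Line-of-Sight (LOS) connected pairs (within communication range and with unobstructed segment). The weights quantify, under the nominal task controller $\tilde{\mathbf u}$, how far the pairwise LOS constraints are from being violated (larger $w^{\mathrm{d+los}}_{i,j}$ = less violation). In the paper $w^{\mathrm{los}}_{i,j}=\frac1L\sum_{o=1}^L\big(\dot h^{\mathrm{los}}_{i,j,o}(\hat{\mathbf x},\mathbf x^{\mathrm{obs}},\tilde{\mathbf u})+\gamma h^{\mathrm{los}}_{i,j,o}(\hat{\mathbf x},\mathbf x^{\mathrm{obs}})\big)$ (average margin of the occlusion-free barrier constraints over $L$ obstacle points) and $w^{\mathrm{d}}_{i,j}$ is the margin $f^{\sigma^{\mathrm c}}_{i,j}-B^{\sigma^{\mathrm c}}_{i,j}\tilde{\mathbf u}$ of the linear probabilistic communication-distance constraints $B^{\sigma^{\mathrm c}}_{i,j}\mathbf u\le f^{\sigma^{\mathrm c}}_{i,j}$; the result only uses that each $w^{\mathrm{d+los}}_{i,j}$ is a real number. A graph is subgroup LOS connected if each of its induced subgraphs on $\mathcal{V}_m$ is connected. *)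

From mathcomp Require Import all_boot all_order all_algebra.
Set Implicit Arguments. Unset Strict Implicit. Unset Printing Implicit Defensive.
Import Order.TTheory GRing.Theory Num.Theory.
Local Open Scope ring_scope.

Section Graphs.
Variable V : finType.

(* Undirected edges are 2-element vertex sets {u,v}. Edge set of the graph
   given by an adjacency relation e. *)
Definition edges_of (e : rel V) : {set {set V}} :=
  [set E : {set V} | [exists u, exists v, e u v && (E == [set u; v])]].

Definition adj (F : {set {set V}}) (S : {set V}) : rel V :=
  fun u v => [&& u \in S, v \in S, u != v & [set u; v] \in F].

Definition conn_on (F : {set {set V}}) (S : {set V}) : Prop :=
  forall u v, u \in S -> v \in S -> connect (adj F S) u v.

Definition acyclic (F : {set {set V}}) : Prop :=
  forall c : seq V, (2 < size c)%N -> ~ ucycle (adj F setT) c.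

Definition spanning_tree (e : rel V) (F : {set {set V}}) : Prop :=
  [/\ F \subset edges_of e, conn_on F setT & acyclic F].

Definition subgroup (M : nat) (g : V -> 'I_M) (m : 'I_M) : {set V} :=
  [set v | g v == m].

Definition intra (M : nat) (g : V -> 'I_M) (E : {set V}) : bool :=
  [forall u in E, forall v in E, g u == g v].

Definition wprime (R : ringType) (M : nat) (g : V -> 'I_M) (beta : R)
  (w : {set V} -> R) (E : {set V}) : R :=
  if intra g E then - (beta * w E) else - w E.

End Graphs.

From mathcomp Require Import all_boot all_order all_algebra.
Set Implicit Arguments. Unset Strict Implicit. Unset Printing Implicit Defensive.
Import Order.TTheory GRing.Theory Num.Theory.

(* Spanning trees are handled by counting: a set of [p] pair edges with [c]
   connected components satisfies [#|V| <= p + c], with equality iff every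
   edge is a bridge, i.e. iff it is a forest.  So a connected edge set of the
   size of a spanning tree is itself a spanning tree.

   (i) If [Tbar] left two vertices of a subgroup [V_m] disconnected inside
   [V_m], some graph edge [ab] within [V_m] joins two pieces of [Tbar[V_m]].
   The intra-subgroup edges of [Tbar] do not connect [a] and [b], so some
   inter-subgroup edge [E] of [Tbar] separates them; exchanging [E] for [ab]
   yields a spanning tree of smaller [w'] weight, since every intra-subgroup
   weight is below every inter-subgroup one.

   (ii) For subgroup connected spanning trees [A] and [B], the intra-subgroup
   edges of [A] together with the inter-subgroup edges of [B] form a spanning
   tree: the intra-subgroup parts of [A] and [B] are forests with the same
   components (the subgroups), hence of the same size.  Comparing [Tbar] with
   the two such mixtures of [Tbar] and a competitor [T] shows that [Tbar] does
   at least as well as [T] on the intra-subgroup edges (where [w' = - beta w]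
   with [beta > 0]) and on the inter-subgroup edges separately. *)

Lemma connect_exit (T : finType) (e1 e2 : rel T) u v :
  connect e1 u v -> ~~ connect e2 u v ->
  exists a b, [/\ connect e2 u a, e1 a b & ~~ connect e2 u b].
Proof.
suff: forall x, connect e2 u x -> forall p, path e1 x p -> ~~ connect e2 u (last x p) ->
    exists a b, [/\ connect e2 u a, e1 a b & ~~ connect e2 u b].
  by move=> exit /connectP[p p_path ->]; apply: exit p_path; apply: connect0.
move=> x ux p; elim: p x ux => [|z p IHp] x ux /=; first by rewrite ux.
case/andP=> xz zp; have [uz | nuz] := boolP (connect e2 u z); first exact: IHp.
by exists x, z.
Qed.

Notation link F := (adj F setT).

Section Forests.
Variable V : finType.
Implicit Types (F G H : {set {set V}}) (a b p q u v x y : V).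

Lemma linkE F u v : link F u v = (u != v) && ([set u; v] \in F).
Proof. by rewrite /adj !in_setT. Qed.

Lemma link_sym F : symmetric (link F).
Proof. by move=> u v; rewrite !linkE eq_sym setUC. Qed.

Lemma connect_link_sym F : connect_sym (link F).
Proof. exact/sym_connect_sym/link_sym. Qed.

Lemma conn_onT F : conn_on F setT <-> forall x y, connect (link F) x y.
Proof. by split=> cF x y; [apply: cF; rewrite in_setT | move=> _ _; apply: cF]. Qed.

Lemma link_sub F G : F \subset G -> subrel (link F) (link G).
Proof. by move=> sFG u v; rewrite !linkE => /andP[-> /(subsetP sFG)]. Qed.

Lemma link_setD1 F E a b : link F a b -> [set a; b] != E -> link (F :\ E) a b.
Proof. by rewrite !linkE !inE => /andP[-> ->] ->. Qed.

Lemma connect_linkS F G x y :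
  F \subset G -> connect (link F) x y -> connect (link G) x y.
Proof. by move/link_sub=> sFG; apply: connect_sub => u v /sFG /connect1. Qed.

Lemma connect_link0 x y : connect (link set0) x y = (x == y).
Proof.
apply/idP/eqP=> [|->]; last exact: connect0.
by case/connectP=> [[|z s]] /=; [move=> _ -> | rewrite linkE inE andbF].
Qed.

Lemma set2_eq_cases p q u v : p != q -> [set p; q] = [set u; v] ->
  (p = u /\ q = v) \/ (p = v /\ q = u).
Proof.
move=> pq puv; have := set21 p q; have := set22 p q; rewrite puv.
by case/set2P=> qE /set2P[] pE; subst; rewrite ?eqxx in pq; auto.
Qed.

Lemma connect_link_setU1 F a b x y :
  connect (link ([set a; b] |: F)) x y =
  [|| connect (link F) x y, connect (link F) x a && connect (link F) b y
    | connect (link F) x b && connect (link F) a y].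
Proof.
have sF := connect_link_sym F; set F' := [set a; b] |: F.
have sFF' : F \subset F' by apply: subsetUr.
apply/idP/idP.
  pose Q := [pred z | [|| connect (link F) x z,
    connect (link F) x a && connect (link F) b z
    | connect (link F) x b && connect (link F) a z]].
  suff /closed_connect clQ : closed (link F') Q.
    by move=> /clQ; rewrite !inE connect0 => <-.
  apply: intro_closed; first exact: connect_link_sym.
  move=> z z'; rewrite linkE in_setU1 => /andP[zz' /orP[/eqP zz'ab | zz'F]].
    rewrite !inE; have [[-> ->] | [-> ->]] := set2_eq_cases zz' zz'ab;
      by case/or3P=> [-> | /andP[-> _] | /andP[-> _]]; rewrite ?connect0 ?orbT.
  have zz'1 : connect (link F) z z' by apply: connect1; rewrite linkE zz'.
  rewrite !inE => /or3P[xz | /andP[-> bz] | /andP[-> az]].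
  - by rewrite (connect_trans xz zz'1).
  - by rewrite (connect_trans bz zz'1) orbT.
  - by rewrite (connect_trans az zz'1) !orbT.
have ab' : connect (link F') a b.
  have [-> | ab] := eqVneq a b; first exact: connect0.
  by apply: connect1; rewrite linkE ab setU11.
have ba' : connect (link F') b a by rewrite connect_link_sym.
case/or3P=> [/(connect_linkS sFF') // | /andP[xa b_y] | /andP[xb ay]].
  by rewrite (connect_trans (connect_linkS sFF' xa)) // (connect_trans ab') //;
    apply: connect_linkS b_y.
by rewrite (connect_trans (connect_linkS sFF' xb)) // (connect_trans ba') //;
  apply: connect_linkS ay.
Qed.

Lemma connect_link_setU1_sub F G a b x y :
  F \subset G -> connect (link G) a b ->
  connect (link ([set a; b] |: F)) x y -> connect (link G) x y.
Proof.
move=> sFG abG; have sG := connect_link_sym G.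
rewrite connect_link_setU1 => /or3P[/(connect_linkS sFG) // | | ].
  case/andP=> /(connect_linkS sFG) xa /(connect_linkS sFG) b_y.
  exact: connect_trans (connect_trans xa abG) b_y.
case/andP=> /(connect_linkS sFG) xb /(connect_linkS sFG) ay.
by rewrite sG in abG; exact: connect_trans (connect_trans xb abG) ay.
Qed.

Definition ncomp F : nat := n_comp (link F) V.

Lemma eq_ncomp F G : connect (link F) =2 connect (link G) -> ncomp F = ncomp G.
Proof. by move=> eFG; rewrite /ncomp (eq_n_comp eFG). Qed.

Lemma ncomp0 : ncomp set0 = #|V|.
Proof.
apply: eq_card => x; rewrite !inE andbT /roots.
by rewrite -connect_link0 connect_link_sym connect_root.
Qed.

Lemma ncomp_setU1_connected F u v :
  connect (link F) u v -> ncomp ([set u; v] |: F) = ncomp F.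
Proof.
move=> uv; apply: eq_ncomp => x y; apply/idP/idP; last exact/connect_linkS/subsetUr.
exact: connect_link_setU1_sub.
Qed.

Lemma ncomp_setU1_disconnected F u v :
  ~~ connect (link F) u v -> (ncomp ([set u; v] |: F)).+1 = ncomp F.
Proof.
move=> nuv; have sF := connect_link_sym F; set F' := [set u; v] |: F.
pose C := [pred x | connect (link F) u x || connect (link F) v x].
have C_closure : closure (link F) (pred2 u v) =i C.
  move=> x; rewrite !inE; apply/existsP/orP => [[t] | [ux | vx]].
  - rewrite !inE /=; case/andP=> xt /orP[] /eqP tE; [left | right]; by rewrite sF -tE.
  - by exists u; rewrite !inE /= eqxx sF ux.
  - by exists v; rewrite !inE /= eqxx orbT sF vx.
have C_connect : C =i connect (link F') u.
  move=> x; rewrite !inE connect_link_setU1 connect0 (negbTE nuv) /=.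
  by rewrite orbF.
have nC : forall x, x \notin C -> connect (link F') x =1 connect (link F) x.
  move=> x; rewrite !inE negb_or => /andP[ux vx] y.
  by rewrite connect_link_setU1 ![connect _ x _]sF (negbTE ux) (negbTE vx) orbF.
rewrite /ncomp !(n_compC C) (eq_n_comp_r C_connect) n_comp_connect; last first.
  exact: connect_link_sym.
rewrite -(eq_n_comp_r C_closure) n_comp_closure2 // nuv add2n; congr _.+2.
apply: eq_card => x.
have [xC | /nC /eq_pick pickE] := boolP (x \in C); rewrite !inE /roots /fingraph.root.
  by move: xC; rewrite inE => ->; rewrite !andbF.
by rewrite pickE.
Qed.

Definition pair_edges F := {in F, forall E, exists u v, u != v /\ E = [set u; v]}.

Definition forest F := forall u v, u != v -> [set u; v] \in F ->
  ~~ connect (link (F :\ [set u; v])) u v.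

Lemma pair_edges_ind (P : {set {set V}} -> Prop) :
  P set0 ->
  (forall F u v, pair_edges F -> u != v -> [set u; v] \notin F ->
     P F -> P ([set u; v] |: F)) ->
  forall F, pair_edges F -> P F.
Proof.
move=> P0 PU1 F; move Fn : #|F| => n; elim: n F Fn => [|n IHn] F Fn pF.
  by rewrite (cards0_eq Fn).
have [E EF] : exists E, E \in F by apply/set0Pn; rewrite -card_gt0 Fn.
have [u [v [uv Euv]]] := pF E EF; subst E.
have pFE : pair_edges (F :\ [set u; v]) by move=> E /setD1P[_ /pF].
rewrite -(setD1K EF); apply: PU1 => //; first by rewrite setD11.
by apply: IHn pFE; move: Fn; rewrite (cardsD1 [set u; v]) EF => -[].
Qed.

Lemma forestS F G : F \subset G -> forest G -> forest F.
Proof.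
move=> sFG fG u v uv /(subsetP sFG) uvG; apply: contra (fG u v uv uvG).
by apply: connect_linkS; apply: setSD.
Qed.

Lemma forest_setU1 F u v : forest F -> ~~ connect (link F) u v ->
  [set u; v] \notin F -> forest ([set u; v] |: F).
Proof.
move=> fF nuv uvF p q pq; rewrite in_setU1 => /orP[/eqP pq_uv | pqF].
  rewrite pq_uv setU1K //.
  by have [[-> ->] | [-> ->]] := set2_eq_cases pq pq_uv; rewrite // connect_link_sym.
have uv_pq : [set u; v] != [set p; q] by apply: contraNneq uvF => ->.
have -> : ([set u; v] |: F) :\ [set p; q] = [set u; v] |: (F :\ [set p; q]).
  by apply/setP=> E; rewrite !inE; case: eqVneq => // ->; rewrite eq_sym (negbTE uv_pq).
have sF := connect_link_sym F; have sub := subD1set F [set p; q].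
have pq1 : connect (link F) p q by apply: connect1; rewrite linkE pq.
rewrite connect_link_setU1 (negbTE (fF p q pq pqF)) /=.
apply/negP=> /orP[] /andP[/(connect_linkS sub) h1 /(connect_linkS sub) h2];
  case/negP: nuv.
- by apply: connect_trans (connect_trans _ pq1) _; rewrite sF.
- by apply: connect_trans (connect_trans h2 _) h1; rewrite sF.
Qed.

Lemma ncomp_card_ge F : pair_edges F -> (#|V| <= #|F| + ncomp F)%N.
Proof.
move: F; apply: pair_edges_ind => [|F u v _ _ uvF IH]; first by rewrite cards0 ncomp0.
rewrite cardsU1 uvF add1n; have [uv | nuv] := boolP (connect (link F) u v).
  by rewrite ncomp_setU1_connected // addSn ltnW.
by rewrite addSnnS (ncomp_setU1_disconnected nuv).
Qed.

Lemma forest_cardP F : pair_edges F -> forest F <-> (#|F| + ncomp F = #|V|)%N.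
Proof.
move: F; apply: pair_edges_ind => [|F u v pF uv uvF IH].
  by rewrite cards0 ncomp0; split=> // _ u v _; rewrite inE.
rewrite cardsU1 uvF add1n; have [c | nc] := boolP (connect (link F) u v).
  rewrite ncomp_setU1_connected //; split=> [fF | cardE].
    by have := fF u v uv (setU11 _ _); rewrite setU1K // c.
  by have := ncomp_card_ge pF; rewrite -cardE addSn ltnn.
rewrite addSnnS (ncomp_setU1_disconnected nc).
split=> [fF | /IH fF]; last exact: forest_setU1.
by apply/IH; apply: forestS fF; apply: subsetUr.
Qed.

Lemma acyclic_forest F : acyclic F -> forest F.
Proof.
move=> acF u v uv uvF; apply/negP=> /connectP[_ /shortenP[p p_path p_uniq _] vE].
have uvF' : ~~ link (F :\ [set u; v]) u v by rewrite linkE setD11 andbF.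
apply: (acF (u :: p)).
  case: p p_path vE {p_uniq} => [|a [|b p]] //=.
    by move=> _ vu; rewrite vu eqxx in uv.
  by rewrite andbT => ua va; subst v; rewrite ua in uvF'.
rewrite /ucycle p_uniq andbT /= rcons_path (sub_path (link_sub (subD1set F _)) p_path).
by rewrite -vE linkE eq_sym uv setUC.
Qed.

Lemma forest_acyclic F : forest F -> acyclic F.
Proof.
move=> fF [|x [|y [|z q]]] // _; set q' := z :: q.
rewrite /ucycle -[cycle _ _]/(link F x y && path (link F) y (rcons q' x)).
rewrite rcons_path 2!cons_uniq => /andP[/and3P[xy yq' q'x] /and3P[x_yq' y_q' _]].
move: xy; rewrite linkE => /andP[xy_ne xyF].
have neq c d w : w \in [set x; y] -> w \notin [set c; d] -> [set c; d] != [set x; y].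
  by move=> wxy; apply: contraNneq => ->.
have yq'_F : path (link (F :\ [set x; y])) y q'.
  apply: (sub_in_path (P := predC1 x)) yq'; last first.
    by apply/allP=> a aq; apply: contraNneq x_yq' => <-.
  move=> a b ax bx ab; apply: link_setD1 ab (neq _ _ x (set21 x y) _).
  by rewrite !inE negb_or ![x == _]eq_sym; apply/andP.
have q'x_F : link (F :\ [set x; y]) (last y q') x.
  apply: link_setD1 q'x (neq _ _ y (set22 x y) _).
  rewrite !inE negb_or [y == x]eq_sym xy_ne andbT.
  by apply: contraNneq y_q' => {1}->; apply: (mem_last z q).
case/negP: (fF x y xy_ne xyF); rewrite connect_link_sym.
by apply/connectP; exists (rcons q' x); rewrite ?rcons_path ?yq'_F ?last_rcons.
Qed.

Lemma forest_separating_edgeS F G E a b :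
  pair_edges F -> forest F -> G \subset F -> E \in G ->
  connect (link G) a b -> ~~ connect (link (G :\ E)) a b ->
  ~~ connect (link (F :\ E)) a b.
Proof.
move=> pF fF sGF EG abG nabGE.
have [p [q [pq Epq]]] := pF E (subsetP sGF E EG); subst E.
have sFE := connect_link_sym (F :\ [set p; q]).
have liftF x y :
    connect (link (G :\ [set p; q])) x y -> connect (link (F :\ [set p; q])) x y.
  exact/connect_linkS/setSD.
apply: contra (fF p q pq (subsetP sGF _ EG)) => abF.
move: abG; rewrite -(setD1K EG) connect_link_setU1 (negbTE nabGE) /=.
case/orP=> /andP[/liftF h1 /liftF h2].
  by apply: connect_trans (connect_trans _ abF) _; rewrite sFE.
by apply: connect_trans (connect_trans h2 _) h1; rewrite sFE.
Qed.

Lemma forest_separating_edge F H a b :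
  pair_edges F -> forest F -> H \subset F ->
  connect (link F) a b -> ~~ connect (link H) a b ->
  exists2 E, E \in F :\: H & ~~ connect (link (F :\ E)) a b.
Proof.
move=> pF fF sHF abF nabH.
suff: forall n G, #|G :\: H| = n -> H \subset G -> G \subset F ->
    connect (link G) a b -> exists2 E, E \in F :\: H & ~~ connect (link (F :\ E)) a b.
  by apply; [reflexivity | exact: sHF | exact: subxx | exact: abF].
elim=> [|n IHn] G GHn sHG sGF abG.
  have sGH : G \subset H by rewrite -setD_eq0 -cards_eq0 GHn.
  by rewrite (connect_linkS sGH abG) in nabH.
have [E EGH] : exists E, E \in G :\: H by apply/set0Pn; rewrite -card_gt0 GHn.
have /setDP[EG EH] := EGH.
have [abGE | nabGE] := boolP (connect (link (G :\ E)) a b).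
  apply: (IHn (G :\ E)) => //.
  - by move: GHn; rewrite (cardsD1 E) EGH setDDl setUC -setDDl => -[].
  - apply/subsetP=> x xH; rewrite !inE (subsetP sHG) // andbT.
    by apply: contraNneq EH => <-.
  - exact: subset_trans (subD1set G E) sGF.
exists E; first by rewrite inE EH (subsetP sGF).
exact: forest_separating_edgeS pF fF sGF EG abG nabGE.
Qed.

End Forests.

Section SpanningTrees.
Variables (V : finType) (e : rel V).
Hypothesis e_irr : irreflexive e.
Implicit Types (F T : {set {set V}}) (a b x y : V).

Lemma pair_edges_of F : F \subset edges_of e -> pair_edges F.
Proof.
move=> sFe E /(subsetP sFe); rewrite inE => /existsP[u /existsP[v /andP[uv /eqP ->]]].
by exists u, v; split=> //; apply: contraTneq uv => ->; rewrite e_irr.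
Qed.

Lemma spanning_tree_connect T : spanning_tree e T -> forall x y, connect (link T) x y.
Proof. by case=> _ /conn_onT. Qed.

Lemma spanning_tree_forest T : spanning_tree e T -> forest T.
Proof. by case=> _ _ /acyclic_forest. Qed.

Lemma spanning_tree_card F T :
  F \subset edges_of e -> (forall x y, connect (link F) x y) ->
  spanning_tree e T -> #|F| = #|T| -> spanning_tree e F.
Proof.
move=> sFe cF sT FT; split=> //.
have [sTe _ _] := sT.
have /(forest_cardP (pair_edges_of sTe)) cardT := spanning_tree_forest sT.
apply/forest_acyclic/(forest_cardP (pair_edges_of sFe)); rewrite FT -cardT.
congr (_ + _)%N; apply: eq_ncomp => x y.
by rewrite cF (spanning_tree_connect sT x y).
Qed.

Lemma spanning_tree_exchange T E a b :
  spanning_tree e T -> E \in T -> a != b -> [set a; b] \in edges_of e ->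
  ~~ connect (link (T :\ E)) a b -> spanning_tree e ([set a; b] |: (T :\ E)).
Proof.
move=> sT ET ab abe nab; have [sTe _ _] := sT.
have [p [q [pq Epq]]] := pair_edges_of sTe ET; subst E.
set T' := [set a; b] |: (T :\ [set p; q]).
have sTT' : T :\ [set p; q] \subset T' by apply: subsetUr.
have sT' := connect_link_sym T'.
have abT' : connect (link T') a b by apply: connect1; rewrite linkE ab setU11.
have pqT' : connect (link T') p q.
  have := spanning_tree_connect sT a b.
  rewrite -(setD1K ET) connect_link_setU1 (negbTE nab) /=.
  case/orP=> /andP[/(connect_linkS sTT') h1 /(connect_linkS sTT') h2].
    by apply: connect_trans (connect_trans _ abT') _; rewrite sT'.
  by apply: connect_trans (connect_trans h2 _) h1; rewrite sT'.
have abT : [set a; b] \notin T :\ [set p; q].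
  by apply: contra nab => abT; apply: connect1; rewrite linkE ab.
apply: (spanning_tree_card _ _ sT).
- apply/subsetP=> E; rewrite in_setU1 => /orP[/eqP -> // | /setD1P[_]].
  exact: (subsetP sTe).
- move=> x y; apply: connect_link_setU1_sub sTT' pqT' _.
  by rewrite setD1K //; apply: (spanning_tree_connect sT).
- by rewrite /T' cardsU1 abT (cardsD1 [set p; q] T) ET.
Qed.

End SpanningTrees.

Section Subgroups.
Variables (V : finType) (M : nat) (g : V -> 'I_M).
Implicit Types (A B F : {set {set V}}) (a b u v x y : V).

Lemma intra_set2 a b : intra g [set a; b] = (g a == g b).
Proof.
apply/forall_inP/eqP=> [/(_ a (set21 a b))/forall_inP/(_ b (set22 a b))/eqP // | gab].
by move=> x /set2P[] -> ; apply/forall_inP=> y /set2P[] ->; rewrite ?gab.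
Qed.

Definition intra_edges F := [set E in F | intra g E].
Definition inter_edges F := [set E in F | ~~ intra g E].

Lemma intra_edges_sub F : intra_edges F \subset F.
Proof. by apply/subsetP=> E /setIdP[]. Qed.

Lemma intra_edges_mix A B : intra_edges (intra_edges A :|: inter_edges B) = intra_edges A.
Proof. by apply/setP=> E; rewrite !inE; case: (intra g E); rewrite ?andbT ?andbF ?orbF. Qed.

Lemma inter_edges_mix A B : inter_edges (intra_edges A :|: inter_edges B) = inter_edges B.
Proof. by apply/setP=> E; rewrite !inE; case: (intra g E); rewrite ?andbT ?andbF. Qed.

Lemma card_intra_inter F : #|F| = (#|intra_edges F| + #|inter_edges F|)%N.
Proof.
rewrite -(cardsID [set E | intra g E] F).
by congr (_ + _)%N; apply: eq_card => E; rewrite !inE andbC.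
Qed.

Lemma link_intra_edges F u v : link (intra_edges F) u v -> g u = g v.
Proof. by rewrite linkE !inE intra_set2 => /and3P[_ _ /eqP]. Qed.

Lemma connect_intra_edges_eq F x y : connect (link (intra_edges F)) x y -> g x = g y.
Proof.
have cl : closed (link (intra_edges F)) [pred z | g z == g x].
  by move=> u v /link_intra_edges guv; rewrite !inE guv.
by move/(closed_connect cl); rewrite !inE eqxx => /esym/eqP.
Qed.

Lemma connect_intra_edges F x y :
  connect (link (intra_edges F)) x y = connect (adj F (subgroup g (g x))) x y.
Proof.
set S := subgroup g (g x); apply/idP/idP.
  case/connectP=> p p_path ->; apply/connectP; exists p => //.
  apply: (sub_in_path (P := [in S]) _ _ p_path).
    by move=> u v uS vS; rewrite linkE /adj uS vS !inE => /and3P[-> ->].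
  by apply/allP=> z /(path_connect p_path)/connect_intra_edges_eq gxz; rewrite inE gxz.
move=> xy; apply: connect_sub xy => u v /and4P[uS vS uv uvF].
move: uS vS; rewrite !inE => /eqP gu /eqP gv.
by apply: connect1; rewrite linkE uv !inE uvF intra_set2 gu gv /=.
Qed.

Lemma connect_intra_edges_subgroup F :
  (forall m, conn_on F (subgroup g m)) ->
  forall x y, connect (link (intra_edges F)) x y = (g x == g y).
Proof.
move=> cF x y; apply/idP/eqP=> [/connect_intra_edges_eq // | gxy].
by rewrite connect_intra_edges; apply: cF; rewrite inE ?gxy.
Qed.

Local Open Scope ring_scope.

Lemma big_intra_inter (R : nmodType) (h : {set V} -> R) F :
  \sum_(E in F) h E = \sum_(E in intra_edges F) h E + \sum_(E in inter_edges F) h E.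
Proof.
by rewrite (bigID (intra g)) /=; congr (_ + _); apply: eq_bigl => E; rewrite !inE.
Qed.

Lemma sum_wprime_intra (R : nzRingType) (beta : R) (w : {set V} -> R) F :
  \sum_(E in intra_edges F) wprime g beta w E = beta * \sum_(E in intra_edges F) - w E.
Proof.
by rewrite mulr_sumr; apply: eq_bigr => E /setIdP[_ intraE]; rewrite /wprime intraE mulrN.
Qed.

Lemma sum_wprime_inter (R : nzRingType) (beta : R) (w : {set V} -> R) F :
  \sum_(E in inter_edges F) wprime g beta w E = \sum_(E in inter_edges F) - w E.
Proof. by apply: eq_bigr => E /setIdP[_ /negbTE interE]; rewrite /wprime interE. Qed.

End Subgroups.

Section LeastViolatedTree.
Variables (V : finType) (M : nat) (g : V -> 'I_M) (e : rel V).
Hypothesis e_irr : irreflexive e.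
Implicit Types (A B T : {set {set V}}).
Local Open Scope ring_scope.

Lemma min_spanning_tree_subgroup_conn (R : numDomainType) (c : {set V} -> R) Tbar :
  (forall m, conn_on (edges_of e) (subgroup g m)) ->
  (forall E1 E2, E1 \in edges_of e -> E2 \in edges_of e ->
     intra g E1 -> ~~ intra g E2 -> c E1 < c E2) ->
  spanning_tree e Tbar ->
  (forall T, spanning_tree e T -> \sum_(E in Tbar) c E <= \sum_(E in T) c E) ->
  forall m, conn_on Tbar (subgroup g m).
Proof.
move=> conn_e c_lt sTbar Tbar_min m u v uS vS; have [sTe _ _] := sTbar.
apply/negPn/negP=> nuv.
have [a [b [ua /and4P[aS bS ab abe] nub]]] := connect_exit (conn_e m u v uS vS) nuv.
move: aS bS; rewrite !inE => /eqP ga /eqP gb.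
have nab : ~~ connect (link (intra_edges g Tbar)) a b.
  by rewrite connect_intra_edges ga; apply: contra nub; apply: connect_trans ua.
have [E /setDP[ETbar EnI] nabE] :=
  forest_separating_edge (pair_edges_of e_irr sTe) (spanning_tree_forest sTbar)
    (intra_edges_sub g Tbar) (spanning_tree_connect sTbar a b) nab.
have interE : ~~ intra g E by apply: contra EnI => intraE; rewrite inE ETbar.
have abT : [set a; b] \notin Tbar :\ E.
  by apply: contra nabE => abT; apply: connect1; rewrite linkE ab.
have := Tbar_min _ (spanning_tree_exchange e_irr sTbar ETbar ab abe nabE).
rewrite big_setU1 //= (big_setD1 E ETbar) /= lerD2r => cE_le.
have intra_ab : intra g [set a; b] by rewrite intra_set2 ga gb.
by have := lt_le_trans (c_lt _ _ abe (subsetP sTe E ETbar) intra_ab interE) cE_le;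
  rewrite ltxx.
Qed.

Lemma spanning_tree_mix A B :
  spanning_tree e A -> spanning_tree e B ->
  (forall m, conn_on A (subgroup g m)) -> (forall m, conn_on B (subgroup g m)) ->
  spanning_tree e (intra_edges g A :|: inter_edges g B).
Proof.
move=> sA sB cA cB; have [sAe _ _] := sA; have [sBe _ _] := sB.
set X := intra_edges g A :|: inter_edges g B.
have card_intra T : spanning_tree e T -> (forall m, conn_on T (subgroup g m)) ->
    (#|intra_edges g T| + ncomp (intra_edges g T) = #|V|)%N.
  case=> sTe _ /acyclic_forest fT cT; have sIT := intra_edges_sub g T.
  apply/forest_cardP; last exact: forestS fT.
  exact/pair_edges_of/(subset_trans sIT).
have intraAB : #|intra_edges g A| = #|intra_edges g B|.
  apply/eqP; rewrite -(eqn_add2r (ncomp (intra_edges g A))) card_intra //.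
  rewrite (@eq_ncomp _ _ (intra_edges g B)) ?card_intra // => x y.
  by rewrite !connect_intra_edges_subgroup.
apply: (spanning_tree_card e_irr _ _ sB).
- apply/subsetP=> E /setUP[] /setIdP[EF _]; [exact: (subsetP sAe) | exact: (subsetP sBe)].
- move=> x y; apply: connect_sub (spanning_tree_connect sB x y) => u v uvB.
  have [guv | nguv] := eqVneq (g u) (g v).
    by apply: (connect_linkS (subsetUl _ _)); rewrite connect_intra_edges_subgroup ?guv.
  apply: connect1; move: uvB; rewrite !linkE !inE intra_set2 nguv.
  by case/andP=> -> ->; rewrite orbT.
- by rewrite (card_intra_inter g) intra_edges_mix inter_edges_mix intraAB -card_intra_inter.
Qed.

End LeastViolatedTree.

Local Open Scope ring_scope.

Theorem theorem5 (V : finType) (M : nat) (g : V -> 'I_M) (e : rel V)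
  (R : realFieldType) (w : {set V} -> R) (beta : R) (Tbar : {set {set V}}) :
  symmetric e -> irreflexive e ->
  conn_on (edges_of e) setT ->
  (forall m : 'I_M, conn_on (edges_of e) (subgroup g m)) ->
  1 < beta ->
  (forall E1 E2, E1 \in edges_of e -> E2 \in edges_of e ->
     intra g E1 -> ~~ intra g E2 ->
     wprime g beta w E1 < wprime g beta w E2) ->
  spanning_tree e Tbar ->
  (forall T, spanning_tree e T ->
     \sum_(E in Tbar) wprime g beta w E <= \sum_(E in T) wprime g beta w E) ->
  (conn_on Tbar setT /\ forall m : 'I_M, conn_on Tbar (subgroup g m)) /\
  (forall T, spanning_tree e T -> (forall m : 'I_M, conn_on T (subgroup g m)) ->
     \sum_(E in Tbar) - w E <= \sum_(E in T) - w E).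
Proof.
move=> _ e_irr _ conn_e beta_gt1 wprime_lt sTbar Tbar_min.
have cTbar := min_spanning_tree_subgroup_conn e_irr conn_e wprime_lt sTbar Tbar_min.
split; first by have [_ ? _] := sTbar.
move=> T sT cT.
have := Tbar_min _ (spanning_tree_mix e_irr sT sTbar cT cTbar).
have := Tbar_min _ (spanning_tree_mix e_irr sTbar sT cTbar cT).
rewrite !(big_intra_inter g _ Tbar) !(big_intra_inter g _ T).
rewrite !(big_intra_inter g _ (_ :|: _)) !intra_edges_mix !inter_edges_mix.
rewrite lerD2l lerD2r !sum_wprime_inter !sum_wprime_intra.
rewrite ler_pM2l ?(lt_trans ltr01 beta_gt1) //.
by move=> inter_le intra_le; apply: lerD.
Qed.
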